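(* Let $q$ be a prime power. For every integer $s$ with $3\leq s\leq \frac{q+4}{2}$ there exists (and one may explicitly construct) an ordered orthogonal array of type $\mathrm{OOA}(4,s,2,q)$.
   Context: An ordered orthogonal array of type $\mathrm{OOA}(4,s,2,v)$ is a $2s\times v^4$ array with entries from an alphabet of size $v$, whose rows are labeled $(i,j)$, $1\le i\le s$, $j\in\{1,2\}$, such that for every set $T$ of $4$ rows which is top-justified (i.e. whenever $(i,2)\in T$ then $(i,1)\in T$), the $4\times v^4$ subarray formed by the rows of $T$ contains each $4$-tuple over the alphabet exactly once as a column. *)

From mathcomp Require Import all_boot.
Set Implicit Arguments. Unset Strict Implicit. Unset Printing Implicit Defensive.

Definition prime_power (q : nat) : Prop :=
  exists p k : nat, prime p /\ 0 < k /\ q = p ^ k.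

(* Rows of an OOA(t,s,2,v) are labelled (i,j) with i : 'I_s and j : 'I_2;
   the paper's level j = 1 is ord0 and level j = 2 is Ordinal 1 < 2. *)
Definition top_justified (s : nat) (T : {set 'I_s * 'I_2}) : Prop :=
  forall i : 'I_s, (i, (@Ordinal 2 1 isT)) \in T -> (i, (@Ordinal 2 0 isT)) \in T.

Definition is_OOA4 (s v : nat) (A : 'I_s * 'I_2 -> 'I_(v ^ 4) -> 'I_v) : Prop :=
  forall f : 'I_4 -> 'I_s * 'I_2,
    injective f ->
    top_justified [set f k | k in 'I_4] ->
    forall t : 'I_4 -> 'I_v,
      exists! c : 'I_(v ^ 4), forall k : 'I_4, A (f k) c = t k.

Definition OOA_4_s_2 (s v : nat) : Prop :=
  exists A : 'I_s * 'I_2 -> 'I_(v ^ 4) -> 'I_v, is_OOA4 A.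

(** Columns are indexed by the polynomials of degree < 4 over a field of
    order [q]; the two rows attached to a point [x] of the projective line
    record the value and the derivative of the polynomial at [x] (at infinity,
    the coefficients of [X^3] and [X^2]). On a top-justified set of four rows a
    derivative is only read together with the value, so a polynomial vanishing
    there has roots of total multiplicity 4 - m at finite points, while the
    multiplicity m at infinity lowers its degree bound to 3 - m: it is zero
    (Hermite interpolation). The column map is thus injective on every such set,
    hence bijective by counting. This works for every [s <= q + 1], which is all
    that the bound [2 s <= q + 4] is used for. *)

From mathcomp Require Import all_boot all_algebra finfield zify.
Set Implicit Arguments. Unset Strict Implicit. Unset Printing Implicit Defensive.
Import GRing.Theory.

Notation lvl1 := (@Ordinal 2 0 isT).
Notation lvl2 := (@Ordinal 2 1 isT).

Lemma OOA_4_s_2_of_injective (s v : nat) (S C : finType)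
    (B : 'I_s * 'I_2 -> C -> S) :
  #|S| = v -> #|C| = v ^ 4 ->
  (forall f : 'I_4 -> 'I_s * 'I_2, injective f ->
     top_justified [set f k | k in 'I_4] ->
     injective (fun c => [ffun k => B (f k) c])) ->
  OOA_4_s_2 s v.
Proof.
move=> cardS cardC B_inj.
pose encS (x : S) : 'I_v := cast_ord cardS (enum_rank x).
pose decC (c : 'I_(v ^ 4)) : C := enum_val (cast_ord (esym cardC) c).
have encS_inj : injective encS := inj_comp (@cast_ord_inj _ _ _) (@enum_rank_inj _).
have decC_inj : injective decC := inj_comp (@enum_val_inj _ _) (@cast_ord_inj _ _ _).
exists (fun r c => encS (B r (decC c))) => f f_inj f_tj t.
pose col c : {ffun 'I_4 -> 'I_v} := [ffun k => encS (B (f k) (decC c))].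
have col_inj : injective col.
  move=> c c' /ffunP E; apply/decC_inj/(B_inj f f_inj f_tj)/ffunP => k.
  by apply: encS_inj; have := E k; rewrite !ffunE.
have card_cols : #|{ffun 'I_4 -> 'I_v}| <= #|'I_(v ^ 4)|.
  by rewrite card_ffun !card_ord.
have /codomP [c Ec] := inj_card_onto col_inj card_cols [ffun k => t k].
exists c; split=> [k | c' Ec']; first by have /ffunP/(_ k) := Ec; rewrite !ffunE.
by apply: col_inj; rewrite -Ec; apply/ffunP => k; rewrite !ffunE.
Qed.

Section PolyMultiplicities.
Local Open Scope ring_scope.
Variable F : fieldType.
Implicit Types (p : {poly F}) (x : F).

Lemma dvdp_prod_coprime (I : eqType) (r : seq I) (G : I -> {poly F}) p :
  uniq r -> {in r &, forall i j, i != j -> coprimep (G i) (G j)} ->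
  {in r, forall i, G i %| p} -> \prod_(i <- r) G i %| p.
Proof.
elim: r => [|i r IHr] /= ; first by rewrite big_nil dvd1p.
case/andP=> i_r r_uniq G_coprime G_dvd; rewrite big_cons Gauss_dvdp.
  rewrite G_dvd ?mem_head //= IHr // => [j k jr kr | j jr].
    by apply: G_coprime; rewrite inE ?jr ?kr orbT.
  by apply: G_dvd; rewrite inE jr orbT.
rewrite big_seq; apply: (big_ind (coprimep (G i))) => [|g h|j jr].
- exact: coprimep1.
- by rewrite coprimepMr => -> ->.
by apply: G_coprime; rewrite ?inE ?eqxx ?jr ?orbT //; apply: contraNneq i_r => ->.
Qed.

Lemma sum_mult_lt_size (I : finType) (P : pred I) (z : I -> F) (m : I -> nat) p :
  p != 0 -> {in P &, injective z} ->
  (forall i, P i -> ('X - (z i)%:P) ^+ m i %| p) ->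
  (\sum_(i | P i) m i < size p)%N.
Proof.
move=> p_neq0 z_inj z_dvd.
pose G i := ('X - (z i)%:P) ^+ m i.
have size_G : size (\prod_(i | P i) G i) = (\sum_(i | P i) m i).+1.
  rewrite size_prod => [|i _]; last by rewrite expf_neq0 ?polyXsubC_eq0.
  under eq_bigr do rewrite size_exp_XsubC -addn1.
  by rewrite big_split /= sum1_card -addSn addnK.
rewrite -size_G; apply: dvdp_leq => //; rewrite -big_filter.
apply: dvdp_prod_coprime => [|i j|i]; rewrite ?filter_uniq ?index_enum_uniq //.
  rewrite !mem_filter => /andP[Pi _] /andP[Pj _] neq_ij.
  rewrite coprimep_expl // coprimep_expr // coprimep_XsubC root_XsubC.
  by apply: contra neq_ij => /eqP/z_inj ->.
by rewrite mem_filter => /andP[/z_dvd].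
Qed.

Lemma dvdp_sqr_XsubC_deriv p x :
  p.[x] = 0 -> p^`().[x] = 0 -> ('X - x%:P) ^+ 2 %| p.
Proof.
move=> px0; have /dvdpP [q ->] : 'X - x%:P %| p by rewrite dvdp_XsubCl /root px0.
rewrite derivM derivXsubC hornerD !hornerE subrr mulr0 add0r => qx0.
have /dvdpP [r ->] : 'X - x%:P %| q by rewrite dvdp_XsubCl /root qx0.
by rewrite -mulrA -expr2 dvdp_mull.
Qed.

Lemma size_poly_leq_coef0 p (n : nat) :
  (size p <= n.+1)%N -> p`_n = 0 -> (size p <= n)%N.
Proof.
move=> /leq_sizeP p_small pn0; apply/leq_sizeP => j; rewrite leq_eqVlt.
by case/orP=> [/eqP <- | /p_small].
Qed.

End PolyMultiplicities.

Section HermiteInterpolation.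
Local Open Scope ring_scope.
Variables (F : fieldType) (I : finType) (a : I -> option F).
Hypothesis a_inj : injective a.

(* [None] is the point at infinity, where [p] is read as a form of degree
   [n - 1]: its "value" and "derivative" are the two top coefficients. *)
Definition hermite_coord (n : nat) (p : {poly F}) (z : option F) (j : 'I_2) : F :=
  match z with
  | Some x => if j == lvl1 then p.[x] else p^`().[x]
  | None => if j == lvl1 then p`_n.-1 else p`_n.-2
  end.

Lemma hermite_coordB n p q z j :
  hermite_coord n (p - q) z j = hermite_coord n p z j - hermite_coord n q z j.
Proof. by case: z => [x|] /=; case: ifP; rewrite ?derivB ?hornerE ?coefB. Qed.

Definition row_mult (S : {set I * 'I_2}) (i : I) : nat :=
  ((i, lvl1) \in S) + ((i, lvl2) \in S).

Lemma sum_row_mult S : (\sum_i row_mult S i)%N = #|S|.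
Proof.
transitivity (\sum_i \sum_(j < 2) ((i, j) \in S : nat))%N.
  apply: eq_bigr => i _; rewrite big_ord_recl big_ord_recl big_ord0 addn0.
  have -> : lift ord0 ord0 = lvl2 :> 'I_2 by apply: val_inj.
  by have -> : ord0 = lvl1 :> 'I_2 by apply: val_inj.
rewrite pair_bigA -sum1_card [RHS]big_mkcond.
by apply: eq_bigr => -[i j] _; case: (_ \in S).
Qed.

Variables (n : nat) (S : {set I * 'I_2}) (p : {poly F}).
Hypotheses (S_closed : forall i, (i, lvl2) \in S -> (i, lvl1) \in S)
           (card_S : #|S| = n) (size_p : (size p <= n)%N)
           (p_vanish : forall r, r \in S -> hermite_coord n p (a r.1) r.2 = 0).

Lemma dvdp_row_mult i x : a i = Some x -> ('X - x%:P) ^+ row_mult S i %| p.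
Proof.
move=> ai.
have v1 : (i, lvl1) \in S -> p.[x] = 0 by move/p_vanish; rewrite /= ai.
have v2 : (i, lvl2) \in S -> p^`().[x] = 0 by move/p_vanish; rewrite /= ai.
rewrite /row_mult; case S2: ((i, lvl2) \in S).
  by rewrite S_closed //; apply: dvdp_sqr_XsubC_deriv; [apply/v1/S_closed|apply: v2].
case S1: ((i, lvl1) \in S); last by rewrite dvd1p.
by rewrite expr1 dvdp_XsubCl /root v1.
Qed.

Lemma size_add_row_mult_infty i : a i = None -> (size p + row_mult S i <= n)%N.
Proof.
move=> ai.
have v1 : (i, lvl1) \in S -> p`_n.-1 = 0 by move/p_vanish; rewrite /= ai.
have v2 : (i, lvl2) \in S -> p`_n.-2 = 0 by move/p_vanish; rewrite /= ai.
have : (row_mult S i <= n)%N by rewrite -card_S -sum_row_mult (bigD1 i) ?leq_addr.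
rewrite /row_mult; case S2: ((i, lvl2) \in S); rewrite ?(S_closed S2) /=.
  case: n size_p v1 v2 => [|[|k]] // size_pk vk1 vk2 _.
  rewrite addn2 !ltnS size_poly_leq_coef0 ?vk2 //.
  by rewrite size_poly_leq_coef0 ?vk1 ?S_closed.
case S1: ((i, lvl1) \in S); rewrite /= ?addn0 //.
case: n size_p v1 => [|k] // size_pk vk1 _.
by rewrite addn1 ltnS size_poly_leq_coef0 ?vk1.
Qed.

Lemma size_add_row_mult_infty_sum :
  (size p + \sum_(i | a i == None) row_mult S i <= n)%N.
Proof.
have [i0 /eqP ai0 | no_infty] := pickP (fun i => a i == None); last first.
  by rewrite big_pred0 // addn0.
rewrite (big_pred1 i0) ?size_add_row_mult_infty // => i.
by apply/eqP/eqP => [ai | ->]; first by apply: a_inj; rewrite ai ai0.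
Qed.

Lemma hermite_vanish_eq0 : p = 0.
Proof.
apply/eqP; apply: contraT => p_neq0.
have finite_lt : (\sum_(i | a i != None) row_mult S i < size p)%N.
  apply: (@sum_mult_lt_size _ _ _ (fun i => odflt 0 (a i))) => // [i j|i].
    rewrite !unfold_in; case ai: (a i) => [x|] //; case aj: (a j) => [y|] //= _ _ yx.
    by apply: a_inj; rewrite ai aj yx.
  by case ai: (a i) => [x|] // _; apply: dvdp_row_mult.
have := size_add_row_mult_infty_sum.
rewrite -card_S -sum_row_mult [leqRHS](bigID (fun i => a i == None)) /=.
by rewrite addnC leq_add2l leqNgt finite_lt.
Qed.

End HermiteInterpolation.

Lemma Poly_tuple_inj (R : nzSemiRingType) (n : nat) :
  injective (fun c : n.-tuple R => Poly c).
Proof.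
move=> c c' /= E; apply: val_inj; apply: (@eq_from_nth _ 0%R); rewrite ?size_tuple //.
by move=> i _; have /= := congr1 (fun p : {poly R} => p`_i)%R E; rewrite !coef_Poly.
Qed.

Theorem corollary5p5 (q : nat) :
  prime_power q ->
  forall s : nat, 3 <= s -> 2 * s <= q + 4 -> OOA_4_s_2 s q.
Proof.
move=> [p [k [p_prime [k_gt0 ->]]]] s _ s_le.
have [F _ cardF] := pPrimePowerField p_prime k_gt0.
have q_gt1 : 1 < p ^ k by rewrite (ltn_exp2l 0) // prime_gt1.
have s_le_points : s <= #|{: option F}| by rewrite card_option cardF; lia.
pose a (i : 'I_s) : option F := enum_val (widen_ord s_le_points i).
have a_inj : injective a.
  by move=> i j /enum_val_inj /(congr1 val) /= ij; apply: val_inj.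
pose B r (c : 4.-tuple F) := hermite_coord 4 (Poly c) (a r.1) r.2.
apply: (@OOA_4_s_2_of_injective _ _ _ _ B cardF); first by rewrite card_tuple cardF.
move=> f f_inj f_tj c c' /ffunP Ecc'; apply: Poly_tuple_inj; apply/eqP.
rewrite -subr_eq0; apply/eqP/(@hermite_vanish_eq0 _ _ _ a_inj 4 _ _ f_tj).
- by rewrite card_imset // card_ord.
- rewrite (leq_trans (size_polyD _ _)) // geq_max size_polyN.
  by rewrite !(leq_trans (size_Poly _)) ?size_tuple.
- move=> r /imsetP [kk _ ->]; have := Ecc' kk; rewrite !ffunE /B => E.
  by rewrite hermite_coordB E subrr.
Qed.
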